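(* Let $G$ be a complete edge-colored graph such that the quotient graph $G[M]/\mathbb{P}_{\max}(M)$ of each strong prime module $M$ of $G$ is a complete edge-colored permutation graph. Then $G$ is a complete edge-colored permutation graph.
   Context: A complete $k$-edge-colored graph $G=(V,E_1,\dots,E_k)$ is the complete graph on a finite set $V$ with edges partitioned into $k$ nonempty color classes $E_i$ (the one-vertex graph also counts); $G_{|i}=(V,E_i)$. A labeling is a bijection $\ell:V\to\{1,\dots,|V|\}$. A graph $(V,E)$ with labeling $\ell$ is a simple permutation graph of a permutation $\pi$ if for all $u,v$ with $\ell(u)>\ell(v)$: $\{u,v\}\in E$ iff $\pi^{-1}(\ell(u))<\pi^{-1}(\ell(v))$. $G$ is a complete edge-colored permutation graph if there exist a labeling $\ell$ and permutations $\pi_1,\dots,\pi_k$ with $(G_{|i},\ell)$ a simple permutation graph of $\pi_i$ for all $i$. A module is a set $M\subseteq V$ such that for every $v\notin M$ all edges $\{u,v\}$, $u\in M$, have the same color; a strong module is a nonempty module comparable by inclusion or disjoint with every other module. For a strong module $M$ with $|M|\ge2$, $\mathbb{P}_{\max}(M)$ is the set of inclusion-maximal strong modules properly contained in $M$, and $G[M]/\mathbb{P}_{\max}(M)$ is the complete graph on $\mathbb{P}_{\max}(M)$ with $\{M_a,M_b\}$ colored by the common color of all edges between $M_a$ and $M_b$; for $|M|=1$ it is the one-vertex graph. A strong module is series if its quotient graph has at least two vertices and all its edges have one color, and prime otherwise. *)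

From mathcomp Require Import all_boot.
From mathcomp Require Import fingroup perm.
Set Implicit Arguments.
Unset Strict Implicit.
Unset Printing Implicit Defensive.

(* A complete edge-colored graph on a finite vertex type T with colors 'I_k is
   given by a color function c : T -> T -> 'I_k; only its values c u v with
   u != v matter (the color of the edge {u,v}), and c is required to be
   symmetric on such pairs. *)

Definition symmetric_coloring (T : finType) (k : nat) (c : T -> T -> 'I_k) :=
  forall u v : T, u != v -> c u v = c v u.

Definition colors_used (T : finType) (k : nat) (c : T -> T -> 'I_k) :=
  1 < #|T| -> forall i : 'I_k, exists u v : T, u != v /\ c u v = i.

(* Complete edge-colored permutation graph, stated for a graph given by its
   color classes E i (E i u v : "{u,v} is an edge of color i"): a labeling
   l : T -> {0,..,n-1} (bijective; 0-based version of {1..n}) and permutations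
   pi_i of the labels such that for all u v with l u > l v:
   {u,v} \in E_i iff pi_i^-1 (l u) < pi_i^-1 (l v). *)
Definition is_cepg_rel (T : finType) (k : nat) (E : 'I_k -> T -> T -> bool)
  : Prop :=
  exists l : T -> 'I_#|T|, bijective l /\
    exists pi : 'I_k -> {perm 'I_#|T|},
      forall (i : 'I_k) (u v : T), l v < l u ->
        (E i u v <-> ((pi i)^-1)%g (l u) < ((pi i)^-1)%g (l v)).

Definition color_class (T : finType) (k : nat) (c : T -> T -> 'I_k) :
  'I_k -> T -> T -> bool := fun i u v => c u v == i.

Definition is_cepg (T : finType) (k : nat) (c : T -> T -> 'I_k) : Prop :=
  is_cepg_rel (color_class c).

Section Modules.
Variables (T : finType) (k : nat) (c : T -> T -> 'I_k).

Definition is_module (M : {set T}) : bool :=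
  [forall v, (v \notin M) ==>
     [forall u in M, [forall u' in M, c u v == c u' v]]].

Definition is_strong_module (M : {set T}) : bool :=
  [&& M != set0, is_module M &
    [forall N : {set T}, is_module N ==>
       [|| N \subset M, M \subset N | [disjoint N & M]]]].

Definition Pmax (M : {set T}) : {set {set T}} :=
  [set N : {set T} | [&& is_strong_module N, N \proper M &
     [forall N' : {set T},
        [&& is_strong_module N', N' \proper M & N \subset N'] ==> (N' == N)]]].

(* The quotient graph G[M]/P_max(M): vertices are the elements of P_max(M),
   and {Ma,Mb} has color i iff the (common) color of the edges between Ma and
   Mb is i, i.e. iff some edge between Ma and Mb has color i. *)
Definition quotient_class (M : {set T}) :
  'I_k -> {X : {set T} | X \in Pmax M} -> {X : {set T} | X \in Pmax M} -> bool
  := fun i a b => [exists x in val a, exists y in val b, c x y == i].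

Definition is_series (M : {set T}) : Prop :=
  is_strong_module M /\ 2 <= #|M| /\ 2 <= #|Pmax M| /\
  exists i : 'I_k, forall Ma Mb, Ma \in Pmax M -> Mb \in Pmax M -> Ma != Mb ->
    [forall x in Ma, forall y in Mb, c x y == i].

Definition is_prime (M : {set T}) : Prop :=
  is_strong_module M /\ ~ is_series M.

End Modules.

Arguments quotient_class [T k] c M _ _ _.
Arguments Pmax [T k] c M.

From mathcomp Require Import all_boot.
From mathcomp Require Import fingroup perm.
From mathcomp Require Import zify.
From Stdlib Require Import Classical IndefiniteDescription.

Set Implicit Arguments.
Unset Strict Implicit.
Unset Printing Implicit Defensive.

(* Induction along the modular decomposition.  The maximal strong modules
   P_max(M) partition a strong module M, and since they are modules the color
   of an edge between two of them depends only on the two blocks.  Realize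
   each block recursively, realize the quotient G[M]/P_max(M) (one color for a
   series module, the hypothesis for a prime one), and order the vertices of M
   lexicographically: first by their block, then inside the block; do the same
   for every permutation.  Labels and permuted labels are handled as injective
   nat-valued functions, replaced by their ranks wherever a bound is needed. *)

Section Rank.
Variables (T : finType) (M : {set T}) (f : T -> nat).

Definition rank (u : T) : nat := #|[set w in M | f w < f u]|.

Lemma rank_lt : {in M &, forall u v, (rank u < rank v) = (f u < f v)}.
Proof.
move=> u v uM vM; rewrite /rank; case: (ltnP (f u) (f v)) => fuv.
  apply: proper_card; rewrite properE; apply/andP; split.
    by apply/subsetP=> w; rewrite !inE => /andP[-> /ltn_trans]; apply.
  by apply/subsetPn; exists u; rewrite !inE ?uM ?fuv ?ltnn.
apply/negbTE; rewrite -leqNgt; apply: subset_leq_card.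
by apply/subsetP=> w; rewrite !inE => /andP[-> /leq_trans]; apply.
Qed.

Lemma rank_bound u : rank u < #|T|.
Proof.
rewrite /rank -cardsT; apply: proper_card; rewrite properT.
by apply/negP=> /eqP/setP/(_ u); rewrite !inE ltnn andbF.
Qed.

Lemma rank_inj : {in M &, injective f} -> {in M &, injective rank}.
Proof.
move=> f_inj u v uM vM ruv; apply: f_inj => //; apply/eqP.
rewrite eqn_leq (leqNgt (f u)) (leqNgt (f v)).
by rewrite -(rank_lt vM uM) -(rank_lt uM vM) ruv ltnn.
Qed.

End Rank.

Lemma ltn_lex (K a b x y : nat) : x < K -> y < K ->
  (a * K + x < b * K + y) = (a < b) || ((a == b) && (x < y)).
Proof.
move=> xK yK; case: (ltngtP a b) => [ab|ba|->] /=.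
- by apply/idP; nia.
- by apply/negbTE; rewrite -leqNgt; nia.
- by rewrite ltn_add2l.
Qed.

Lemma lex_inj (K a b x y : nat) : x < K -> y < K ->
  a * K + x = b * K + y -> a = b /\ x = y.
Proof.
move=> xK yK e; have K_gt0 : 0 < K by apply: leq_ltn_trans xK.
split; first by have := congr1 (divn^~ K) e; rewrite /= !divnMDl // !divn_small ?addn0.
by have := congr1 (modn^~ K) e; rewrite /= !modnMDl !modn_small.
Qed.

Section ModularDecomposition.
Variables (T : finType) (k : nat) (c : T -> T -> 'I_k).
Implicit Types (M A B N : {set T}) (u v x y : T).

(* [p i u] plays the role of pi_i^-1 (l u). *)
Definition realizes (M : {set T}) (l : T -> nat) (p : 'I_k -> T -> nat) :=
  [/\ {in M &, injective l}, forall i, {in M &, injective (p i)} &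
      forall i, {in M &, forall u v, l v < l u -> (c u v == i) = (p i u < p i v)}].

Lemma realizes_small M : #|M| <= 1 -> realizes M (fun _ => 0) (fun _ _ => 0).
Proof.
move=> /card_le1_eqP M_le1.
by split=> [u v uM vM _|i u v uM vM _|i u v _ _]; [apply: M_le1 | apply: M_le1 | rewrite ltnn].
Qed.

Lemma realizes_rank M l p :
  realizes M l p -> realizes M (rank M l) (fun i => rank M (p i)).
Proof.
case=> l_inj p_inj lpE; split=> [|i|i u v uM vM]; do ?exact: rank_inj.
by rewrite !rank_lt //; apply: lpE.
Qed.

Lemma is_strong_module_set1 x : is_strong_module c [set x].
Proof.
apply/and3P; split.
- by apply/set0Pn; exists x; rewrite inE.
- apply/forallP=> v; apply/implyP=> _; apply/forall_inP=> u /set1P->.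
  by apply/forall_inP=> u' /set1P->.
- apply/forallP=> N; apply/implyP=> _; case: (boolP (x \in N)) => xN.
    by rewrite sub1set xN orbT.
  by rewrite disjoint_sym disjoints1 xN !orbT.
Qed.

Lemma is_strong_moduleT : [set: T] != set0 -> is_strong_module c [set: T].
Proof.
move=> T_neq0; apply/and3P; split=> //; first by apply/forallP=> v; rewrite inE.
by apply/forallP=> N; apply/implyP=> _; rewrite subsetT.
Qed.

Lemma PmaxP M A : A \in Pmax c M -> [/\ is_strong_module c A, A \proper M &
  forall N, is_strong_module c N -> N \proper M -> A \subset N -> N = A].
Proof.
rewrite inE => /and3P[sA pA /forallP maxA]; split=> // N sN pN AN.
by apply/eqP; move: (maxA N); rewrite sN pN AN.
Qed.

Lemma Pmax_meet M A B x :
  A \in Pmax c M -> B \in Pmax c M -> x \in A -> x \in B -> A = B.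
Proof.
case/PmaxP=> sA pA maxA /PmaxP[sB pB maxB] xA xB.
case/and3P: (sA) => _ _ /forallP/(_ B); case/and3P: (sB) => _ -> _ /=.
case/or3P=> [BA|AB|/disjointFl/(_ xA)]; [exact: maxB | by rewrite (maxA B) |].
by rewrite xB.
Qed.

Lemma Pmax_cover M x : 1 < #|M| -> x \in M -> exists2 A, A \in Pmax c M & x \in A.
Proof.
move=> M_gt1 xM.
pose Q N := [&& is_strong_module c N, N \proper M & x \in N].
have Qx : Q [set x].
  by rewrite /Q is_strong_module_set1 properEcard sub1set xM cards1 M_gt1 set11.
case: (arg_maxnP (fun N : {set T} => #|N|) Qx) => A /and3P[sA pA xA] maxA.
exists A => //; rewrite inE sA pA; apply/forallP=> N; apply/implyP.
case/and3P=> sN pN AN; rewrite eq_sym eqEcard AN; apply: maxA.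
by rewrite /Q sN pN (subsetP AN).
Qed.

Definition block M x : {set T} := odflt set0 [pick A in Pmax c M | x \in A].

Lemma blockP M x : 1 < #|M| -> x \in M -> block M x \in Pmax c M /\ x \in block M x.
Proof.
move=> M_gt1 xM; rewrite /block; case: pickP => [A /andP[]|noA] //=.
by case: (Pmax_cover M_gt1 xM) => A PA xA; move: (noA A); rewrite PA xA.
Qed.

(* A realizer of G[M]/P_max(M), with each block standing for its vertex. *)
Definition realizes_quotient M (L : {set T} -> nat) (Q : 'I_k -> {set T} -> nat) :=
  [/\ {in Pmax c M &, injective L}, forall i, {in Pmax c M &, injective (Q i)} &
      forall i A B x y, A \in Pmax c M -> B \in Pmax c M -> x \in A -> y \in B ->
        L B < L A -> (c x y == i) = (Q i A < Q i B)].

Definition lexrank M (f : {set T} -> nat) (g : {set T} -> T -> nat) u :=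
  f (block M u) * #|T| + rank (block M u) (g (block M u)) u.

Section Lexrank.
Variables (M : {set T}) (f : {set T} -> nat) (g : {set T} -> T -> nat).
Hypotheses (M_gt1 : 1 < #|M|) (f_inj : {in Pmax c M &, injective f}).

Lemma lexrank_inj :
  (forall A, A \in Pmax c M -> {in A &, injective (g A)}) ->
  {in M &, injective (lexrank M f g)}.
Proof.
move=> g_inj u v uM vM.
have [Bu uB] := blockP M_gt1 uM; have [Bv vB] := blockP M_gt1 vM.
case/(lex_inj (rank_bound _ _ _) (rank_bound _ _ _)) => /f_inj-/(_ Bu Bv) eB.
by rewrite -eB in vB *; apply: rank_inj (g_inj _ Bu) _ _ uB vB.
Qed.

Lemma lexrank_lt u v : u \in M -> v \in M ->
  (lexrank M f g u < lexrank M f g v) =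
  if block M u == block M v then g (block M u) u < g (block M u) v
  else f (block M u) < f (block M v).
Proof.
move=> uM vM; have [Bu uB] := blockP M_gt1 uM; have [Bv vB] := blockP M_gt1 vM.
rewrite /lexrank ltn_lex ?rank_bound //.
case: (eqVneq (block M u) (block M v)) => [eB|nB].
  by rewrite -eB in vB *; rewrite ltnn eqxx rank_lt.
have /negbTE-> : f (block M u) != f (block M v) by apply: contra_neq nB; apply: f_inj.
by rewrite orbF.
Qed.

End Lexrank.

Lemma realizes_lex M : 1 < #|M| ->
  (forall A, A \in Pmax c M -> exists l p, realizes A l p) ->
  (exists L Q, realizes_quotient M L Q) -> exists l p, realizes M l p.
Proof.
move=> M_gt1 realA [L [Q [L_inj Q_inj LQE]]].
have [lp lpE] : exists lp : {set T} -> (T -> nat) * ('I_k -> T -> nat),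
    forall A, A \in Pmax c M -> realizes A (lp A).1 (lp A).2.
  apply: (functional_choice (fun A lp => A \in Pmax c M -> realizes A lp.1 lp.2)).
  move=> A; case: (boolP (A \in Pmax c M)) => [/realA[l [p Alp]]|_].
    by exists (l, p).
  by exists (fun _ => 0, fun _ _ => 0).
exists (lexrank M L (fun A => (lp A).1)).
exists (fun i => lexrank M (Q i) (fun A => (lp A).2 i)).
split=> [|i|i u v uM vM].
- by apply: lexrank_inj => // A /lpE[].
- by apply: lexrank_inj => // A /lpE[_ p_inj _]; apply: p_inj.
have [Bu uB] := blockP M_gt1 uM; have [Bv vB] := blockP M_gt1 vM.
rewrite !lexrank_lt //; have [eB|nB] := eqVneq (block M v) (block M u).
  by rewrite eB in vB *; case: (lpE _ Bu) => _ _; apply.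
exact: LQE.
Qed.

Lemma series_realizes_quotient M (i0 : 'I_k) :
  (forall A B, A \in Pmax c M -> B \in Pmax c M -> A != B ->
    [forall x in A, forall y in B, c x y == i0]) ->
  exists L Q, realizes_quotient M L Q.
Proof.
move=> seriesM; pose L (A : {set T}) := val (enum_rank A).
have L_inj : injective L by move=> A B /val_inj/enum_rank_inj.
have L_bound A : L A < #|{set T}| by apply: ltn_ord.
(* all edges between blocks have color i0: reverse L for i0, keep L otherwise *)
exists L, (fun i A => if i == i0 then #|{set T}| - L A else L A).
split=> [A B _ _ /L_inj //|i A B _ _|i A B x y PA PB xA yB BA] /=.
  by have := L_bound A; have := L_bound B; case: (i == i0) => ? ? ?; apply: L_inj; lia.
have AB : A != B by apply: contraTneq BA => ->; rewrite ltnn.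
move: (seriesM A B PA PB AB) => /forall_inP/(_ x xA)/forall_inP/(_ y yB)/eqP->.
have := L_bound A; have := L_bound B.
case: eqVneq => [_ ? ?|_ _ _]; first by symmetry; apply/idP; lia.
by symmetry; apply/negbTE; rewrite -leqNgt ltnW.
Qed.

Section Symmetric.
Hypothesis c_sym : symmetric_coloring c.

Lemma module_color_const A B x x' y y' :
  is_module c A -> is_module c B -> [disjoint A & B] ->
  x \in A -> x' \in A -> y \in B -> y' \in B -> c x y = c x' y'.
Proof.
move=> /forallP modA /forallP modB AB xA x'A yB y'B.
have yA : y \notin A by rewrite (disjointFl AB yB).
have x'B : x' \notin B by rewrite disjoint_sym in AB; rewrite (disjointFl AB x'A).
have x'y : x' != y by apply: contraNneq yA => <-.
have x'y' : x' != y' by apply: contraNneq x'B => ->.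
have := modA y; rewrite yA => /forall_inP/(_ x xA)/forall_inP/(_ x' x'A)/eqP->.
rewrite c_sym // [c x' y']c_sym //.
by have := modB x'; rewrite x'B => /forall_inP/(_ y yB)/forall_inP/(_ y' y'B)/eqP->.
Qed.

Lemma quotient_class_color M (a b : {X | X \in Pmax c M}) i x y :
  a != b -> x \in val a -> y \in val b -> quotient_class c M i a b = (c x y == i).
Proof.
case: a b => [A PA] [B PB] /= ab xA yB.
have AB : [disjoint A & B].
  apply/pred0P=> z /=; apply/negP=> /andP[zA zB].
  have eAB := Pmax_meet PA PB zA zB; move: PB ab; rewrite -eAB => PB.
  by rewrite (bool_irrelevance PB PA) eqxx.
case/PmaxP: (PA) => /and3P[_ modA _] _ _; case/PmaxP: (PB) => /and3P[_ modB _] _ _.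
apply/exists_inP/idP=> [[x' x'A /exists_inP[y' y'B]]|cxy].
  by rewrite (module_color_const modA modB AB xA x'A yB y'B).
by exists x => //; apply/exists_inP; exists y.
Qed.

Lemma cepg_realizes_quotient M :
  is_cepg_rel (quotient_class c M) -> exists L Q, realizes_quotient M L Q.
Proof.
move=> [l [l_bij [pi lpiE]]].
have insubE A (PA : A \in Pmax c M) : insub A = Some (exist _ A PA).
  exact: (insubT (fun X => X \in Pmax c M) PA).
exists (fun A => if insub A is Some a then val (l a) else 0).
exists (fun i A => if insub A is Some a then val ((pi i)^-1%g (l a)) else 0).
split=> [A B PA PB|i A B PA PB|i A B x y PA PB xA yB]; rewrite !insubE.
- by move=> /val_inj/(bij_inj l_bij)/(congr1 val).
- by move=> /val_inj/perm_inj/(bij_inj l_bij)/(congr1 val).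
move=> lt; have ab : exist _ A PA != exist _ B PB.
  by apply: contraTneq lt => ->; rewrite ltnn.
rewrite -(quotient_class_color i ab xA yB).
by apply/idP/idP => /(lpiE i _ _ lt) h; exact h.
Qed.

Lemma strong_module_realizable :
  (forall M, is_prime c M -> 2 <= #|M| -> is_cepg_rel (quotient_class c M)) ->
  forall M, is_strong_module c M -> exists l p, realizes M l p.
Proof.
move=> prime_cepg M; have [n] := ubnP #|M|; elim: n M => // n IH M M_lt sM.
have [M_le1|M_gt1] := leqP #|M| 1; first by do 2!eexists; apply: realizes_small.
apply: realizes_lex (M_gt1) _ _.
  by move=> A /PmaxP[sA /proper_card AM _]; apply: IH sA; lia.
have [[_ [_ [_ [i0 seriesM]]]]|not_series] := classic (is_series c M).
  exact: series_realizes_quotient seriesM.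
by apply: cepg_realizes_quotient; apply: prime_cepg M_gt1; split.
Qed.

End Symmetric.

Lemma realizes_is_cepg l p : realizes [set: T] l p -> is_cepg c.
Proof.
move/realizes_rank=> [l_inj p_inj lpE].
pose lo u : 'I_#|T| := Ordinal (rank_bound [set: T] l u).
have lo_bij : bijective lo.
  apply: inj_card_bij; last by rewrite card_ord.
  by move=> u v /(congr1 val) /= /l_inj; apply; rewrite inE.
case: (lo_bij) => g loK gK.
pose sg i j : 'I_#|T| := Ordinal (rank_bound [set: T] (p i) (g j)).
have sg_inj i : injective (sg i).
  move=> j j' /(congr1 val)/(p_inj i); rewrite !inE => /(_ isT isT)/(congr1 lo).
  by rewrite !gK.
exists lo; split=> //; exists (fun i => (perm (sg_inj i))^-1%g) => i u v lt.
by rewrite invgK !permE /sg /= !loK /color_class (lpE i u v) ?inE.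
Qed.

End ModularDecomposition.

Theorem proposition4p10 (T : finType) (k : nat) (c : T -> T -> 'I_k) :
  symmetric_coloring c -> colors_used c ->
  (forall M : {set T}, is_prime c M -> 2 <= #|M| ->
     is_cepg_rel (quotient_class c M)) ->
  is_cepg c.
Proof.
move=> c_sym _ prime_cepg.
have [l [p realT]] : exists l p, realizes c [set: T] l p.
  have [T_le1|T_gt1] := leqP #|[set: T]| 1.
    by do 2!eexists; apply: realizes_small.
  apply: strong_module_realizable => //; apply: is_strong_moduleT.
  by rewrite -card_gt0 ltnW.
exact: realizes_is_cepg realT.
Qed.
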